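(* Let $(\mathcal M,g)$ be a compact Riemannian manifold without boundary, $\alpha>0$, $s\in\mathbb R$, $\gamma>0$ and $\Lambda>0$. Let $\mathcal S_g:=(\Delta_H+\alpha I)^{-1}=m_\star(\Delta_H)$ with $m_\star(\lambda)=(\lambda+\alpha)^{-1}$. Let $\Pi_{\le\Lambda}$ be the $L^2$-orthogonal spectral projector onto the direct sum of eigenspaces of $\Delta_H$ with eigenvalues $\le\Lambda$. For any parameterized (bounded) multiplier $m_\theta:[0,\infty)\to\mathbb R$ define $\widehat{\mathcal S}_{\theta,\Lambda}:=m_\theta(\Delta_H)\Pi_{\le\Lambda}$ and $\varepsilon_\Lambda(\theta):=\sup_{0\le\lambda\le\Lambda}|m_\theta(\lambda)-m_\star(\lambda)|$. Then there exists $C_\alpha<\infty$ depending only on $\alpha$ such that $$\|\mathcal S_g-\widehat{\mathcal S}_{\theta,\Lambda}\|_{H^{s-1+\gamma}\to H^{s+1}}\le C_\alpha(1+\Lambda)^{-\gamma/2}+(1+\Lambda)\,\varepsilon_\Lambda(\theta).$$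
   Context: $\Delta_H=d\delta+\delta d$ is the Hodge Laplacian on $1$-forms of $(\mathcal M,g)$, with $L^2$-orthonormal eigenbasis $\{\psi_k\}$ and eigenvalues $\lambda_k\ge0$, $\lambda_k\to\infty$. For a bounded function $m$, $m(\Delta_H)\omega=\sum_k m(\lambda_k)\langle\omega,\psi_k\rangle_{L^2}\psi_k$. Sobolev norms are defined spectrally: $\|\omega\|^2_{H^r\Omega^1}=\sum_{k}(1+\lambda_k)^r|\langle\omega,\psi_k\rangle_{L^2}|^2$. *)

(* Spectral model of the Hodge Laplacian on 1-forms:
   a 1-form omega is identified with its coefficient sequence
   c k = <omega, psi_k>_{L^2} in the L^2-orthonormal eigenbasis {psi_k},
   with eigenvalues lam k >= 0, lam k -> +oo. *)
From Stdlib Require Import Reals.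
From Coquelicot Require Import Coquelicot.
Open Scope R_scope.

Definition spectral_data (lam : nat -> R) : Prop :=
  (forall k, 0 <= lam k) /\ is_lim_seq lam p_infty.

Definition form := nat -> R.

Definition sob_terms (lam : nat -> R) (r : R) (c : form) : nat -> R :=
  fun k => Rpower (1 + lam k) r * (c k) ^ 2.
Definition in_H (lam : nat -> R) (r : R) (c : form) : Prop :=
  ex_series (sob_terms lam r c).
Definition sob_norm (lam : nat -> R) (r : R) (c : form) : R :=
  sqrt (Series (sob_terms lam r c)).

Definition mult_op (lam : nat -> R) (m : R -> R) (c : form) : form :=
  fun k => m (lam k) * c k.

Definition proj_le (lam : nat -> R) (Lam : R) (c : form) : form :=
  fun k => if Rle_dec (lam k) Lam then c k else 0.

Definition m_star (alpha : R) (x : R) : R := / (x + alpha).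
Definition S_g (lam : nat -> R) (alpha : R) : form -> form :=
  mult_op lam (m_star alpha).

Definition S_hat (lam : nat -> R) (m : R -> R) (Lam : R) : form -> form :=
  fun c => mult_op lam m (proj_le lam Lam c).

Definition eps_Lam (alpha : R) (m : R -> R) (Lam : R) : Rbar :=
  Lub_Rbar (fun y => exists x, 0 <= x <= Lam /\ y = Rabs (m x - m_star alpha x)).

Definition op_norm (lam : nat -> R) (a b : R) (T : form -> form) : Rbar :=
  Lub_Rbar (fun y => exists c, in_H lam a c /\ sob_norm lam a c <= 1 /\
                      in_H lam b (T c) /\ y = sob_norm lam b (T c)).

Definition maps_into (lam : nat -> R) (a b : R) (T : form -> form) : Prop :=
  forall c, in_H lam a c -> in_H lam b (T c).

Definition minus_op (T U : form -> form) : form -> form :=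
  fun c k => T c k - U c k.

(* In the eigenbasis of the Hodge Laplacian, [S_g - S_hat] is diagonal with symbol
   [m_star - m] on the band [lam <= Lam] and [m_star] above it.  A diagonal operator
   maps [H^a] to [H^b] with norm at most [sup_k (1 + lam_k)^((b - a)/2) |d_k|]; here
   the gain is [1 - gamma/2].  On the low band the weighted symbol is at most
   [(1 + Lam) eps_Lam].  On the high band
   [(1 + lam)^(1 - gamma/2) / (lam + alpha) <= (1 + 1/alpha) (1 + Lam)^(-gamma/2)],
   since [(1 + lam)/(lam + alpha) <= 1 + 1/alpha] for [lam >= 0].
   Hence [C_alpha = 1 + 1/alpha] works. *)
From Stdlib Require Import Reals Lra.
From Coquelicot Require Import Coquelicot.
Open Scope R_scope.

Lemma Rpower_gt0 (x y : R) : 0 < Rpower x y.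
Proof. apply exp_pos. Qed.

Lemma Rpower_Ropp_le_l (x y g : R) :
  0 < x -> x <= y -> 0 <= g -> Rpower y (- g) <= Rpower x (- g).
Proof.
  intros Hx Hxy Hg. rewrite !Rpower_Ropp.
  apply Rinv_le_contravar; [apply Rpower_gt0 | apply Rle_Rpower_l; lra].
Qed.

Lemma Rpower_half_sq (x y : R) : Rpower x y = Rpower x (y / 2) ^ 2.
Proof. replace y with (y / 2 + y / 2) at 1 by field. rewrite Rpower_plus. ring. Qed.

Lemma sob_terms_ge0 (lam : nat -> R) (r : R) (c : form) (k : nat) :
  0 <= sob_terms lam r c k.
Proof. apply Rmult_le_pos; [left; apply Rpower_gt0 | apply pow2_ge_0]. Qed.

Definition acts_diagonally (T : form -> form) (d : nat -> R) : Prop :=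
  forall c k, T c k = d k * c k.

Section DiagonalOperator.

Variables (lam : nat -> R) (a b K : R) (T : form -> form) (d : nat -> R).
Hypothesis T_diag : acts_diagonally T d.
Hypothesis weighted_symbol_le :
  forall k, Rpower (1 + lam k) ((b - a) / 2) * Rabs (d k) <= K.

Lemma weighted_symbol_bound_ge0 : 0 <= K.
Proof.
  apply Rle_trans with (2 := weighted_symbol_le 0%nat).
  apply Rmult_le_pos; [left; apply Rpower_gt0 | apply Rabs_pos].
Qed.

Lemma sob_terms_diag_le (c : form) (k : nat) :
  sob_terms lam b (T c) k <= K ^ 2 * sob_terms lam a c k.
Proof.
  unfold sob_terms. rewrite T_diag.
  replace b with (a + (b - a)) at 1 by ring.
  rewrite Rpower_plus, (Rpower_half_sq _ (b - a)), Rpow_mult_distr, <- (pow2_abs (d k)).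
  assert (Hsq : (Rpower (1 + lam k) ((b - a) / 2) * Rabs (d k)) ^ 2 <= K ^ 2).
  { apply pow_incr. split; [| apply weighted_symbol_le].
    apply Rmult_le_pos; [left; apply Rpower_gt0 | apply Rabs_pos]. }
  rewrite Rpow_mult_distr in Hsq.
  replace (K ^ 2 * _) with (Rpower (1 + lam k) a * c k ^ 2 * K ^ 2) by ring.
  replace (Rpower (1 + lam k) a * _ * _)
    with (Rpower (1 + lam k) a * c k ^ 2
          * (Rpower (1 + lam k) ((b - a) / 2) ^ 2 * Rabs (d k) ^ 2)) by ring.
  apply Rmult_le_compat_l; [apply sob_terms_ge0 | exact Hsq].
Qed.

Lemma maps_into_diag : maps_into lam a b T.
Proof.
  intros c Hc. apply (ex_series_le (K := R_AbsRing) (V := R_CompleteNormedModule)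
                      _ (fun k => K ^ 2 * sob_terms lam a c k)).
  - intros k. change (Rabs (sob_terms lam b (T c) k) <= K ^ 2 * sob_terms lam a c k).
    rewrite Rabs_pos_eq by apply sob_terms_ge0. apply sob_terms_diag_le.
  - exact (ex_series_scal_l (K ^ 2) _ Hc).
Qed.

Lemma sob_norm_diag_le (c : form) :
  in_H lam a c -> sob_norm lam b (T c) <= K * sob_norm lam a c.
Proof.
  intros Hc. unfold sob_norm.
  rewrite <- (sqrt_pow2 K weighted_symbol_bound_ge0), <- sqrt_mult_alt by apply pow2_ge_0.
  apply sqrt_le_1_alt. rewrite <- Series_scal_l.
  apply Series_le; [|exact (ex_series_scal_l (K ^ 2) _ Hc)].
  intros k. split; [apply sob_terms_ge0 | apply sob_terms_diag_le].
Qed.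

Lemma op_norm_diag_le : Rbar_le (op_norm lam a b T) (Finite K).
Proof.
  apply (proj2 (Lub_Rbar_correct _)). intros y [c [Hc [Hn [_ ->]]]]. simpl.
  pose proof (sob_norm_diag_le c Hc). pose proof weighted_symbol_bound_ge0. nra.
Qed.

End DiagonalOperator.

Definition residual_symbol (alpha : R) (m : R -> R) (Lam x : R) : R :=
  if Rle_dec x Lam then m_star alpha x - m x else m_star alpha x.

Lemma S_g_minus_S_hat_diag (lam : nat -> R) (alpha : R) (m : R -> R) (Lam : R) :
  acts_diagonally (minus_op (S_g lam alpha) (S_hat lam m Lam))
                  (fun k => residual_symbol alpha m Lam (lam k)).
Proof.
  intros c k. unfold minus_op, S_g, S_hat, mult_op, proj_le, residual_symbol.
  destruct (Rle_dec (lam k) Lam); ring.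
Qed.

Lemma m_star_bounds (alpha x : R) :
  0 < alpha -> 0 <= x -> 0 < m_star alpha x <= / alpha.
Proof.
  intros Ha Hx. unfold m_star.
  split; [apply Rinv_0_lt_compat | apply Rinv_le_contravar]; lra.
Qed.

Lemma one_plus_mul_m_star_le (alpha x : R) :
  0 < alpha -> 0 <= x -> (1 + x) * m_star alpha x <= 1 + / alpha.
Proof.
  intros Ha Hx. unfold m_star.
  apply Rmult_le_reg_r with (x + alpha); [lra |].
  rewrite Rmult_assoc, Rinv_l by lra.
  replace ((1 + / alpha) * (x + alpha)) with (x + alpha + x / alpha + 1) by (field; lra).
  assert (0 <= x / alpha) by (apply Rdiv_le_0_compat; lra). lra.
Qed.

Lemma eps_Lam_finite (alpha : R) (m : R -> R) (Lam : R) :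
  0 < alpha -> 0 <= Lam -> (exists B, forall x, 0 <= x -> Rabs (m x) <= B) ->
  exists e, eps_Lam alpha m Lam = Finite e /\ 0 <= e /\
    forall x, 0 <= x <= Lam -> Rabs (m x - m_star alpha x) <= e.
Proof.
  intros Ha HL [B HB]. unfold eps_Lam.
  set (E := fun y => exists x, 0 <= x <= Lam /\ y = Rabs (m x - m_star alpha x)).
  destruct (Lub_Rbar_correct E) as [Hub Hleast].
  assert (Hmem : forall x, 0 <= x <= Lam ->
    Rbar_le (Finite (Rabs (m x - m_star alpha x))) (Lub_Rbar E)).
  { intros x Hx. apply Hub. now exists x. }
  assert (Hbounded : Rbar_le (Lub_Rbar E) (Finite (B + / alpha))).
  { apply Hleast. intros y [x [Hx ->]]. simpl.
    pose proof (HB x (proj1 Hx)). pose proof (m_star_bounds alpha x Ha (proj1 Hx)).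
    pose proof (Rabs_triang (m x) (- m_star alpha x)) as Htri.
    rewrite Rabs_Ropp, (Rabs_pos_eq (m_star alpha x)) in Htri by lra.
    unfold Rminus. lra. }
  pose proof (Hmem 0 (conj (Rle_refl 0) HL)) as H0.
  destruct (Lub_Rbar E) as [e| |]; simpl in H0, Hbounded; try contradiction.
  exists e. split; [reflexivity | split].
  - pose proof (Rabs_pos (m 0 - m_star alpha 0)). lra.
  - exact Hmem.
Qed.

Section ResidualSymbol.

Variables (alpha gamma Lam e : R) (m : R -> R).
Hypotheses (alpha_gt0 : 0 < alpha) (gamma_ge0 : 0 <= gamma) (Lam_ge0 : 0 <= Lam).
Hypothesis e_ge0 : 0 <= e.
Hypothesis e_bound : forall x, 0 <= x <= Lam -> Rabs (m x - m_star alpha x) <= e.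

Lemma residual_symbol_low (x : R) : 0 <= x <= Lam ->
  Rpower (1 + x) (1 - gamma / 2) * Rabs (residual_symbol alpha m Lam x) <= (1 + Lam) * e.
Proof.
  intros Hx. unfold residual_symbol. destruct (Rle_dec x Lam) as [_ | Hn]; [| lra].
  rewrite Rabs_minus_sym.
  assert (Rpower (1 + x) (1 - gamma / 2) <= 1 + Lam).
  { apply Rle_trans with (Rpower (1 + x) 1); [apply Rle_Rpower; lra |].
    rewrite Rpower_1; lra. }
  pose proof (e_bound x Hx). pose proof (Rabs_pos (m x - m_star alpha x)).
  pose proof (Rpower_gt0 (1 + x) (1 - gamma / 2)). nra.
Qed.

Lemma residual_symbol_high (x : R) : Lam < x ->
  Rpower (1 + x) (1 - gamma / 2) * Rabs (residual_symbol alpha m Lam x)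
  <= (1 + / alpha) * Rpower (1 + Lam) (- gamma / 2).
Proof.
  intros Hx. unfold residual_symbol. destruct (Rle_dec x Lam) as [Hl | _]; [lra |].
  destruct (m_star_bounds alpha x alpha_gt0) as [Hpos _]; [lra |].
  rewrite Rabs_pos_eq by lra.
  replace (1 - gamma / 2) with (1 + - (gamma / 2)) by ring.
  rewrite Rpower_plus, Rpower_1 by lra.
  replace (- gamma / 2) with (- (gamma / 2)) by field.
  pose proof (one_plus_mul_m_star_le alpha x alpha_gt0 ltac:(lra)).
  pose proof (Rpower_Ropp_le_l (1 + Lam) (1 + x) (gamma / 2) ltac:(lra) ltac:(lra) ltac:(lra)).
  replace (_ * _ * m_star alpha x)
    with ((1 + x) * m_star alpha x * Rpower (1 + x) (- (gamma / 2))) by ring.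
  apply Rmult_le_compat; [nra | left; apply Rpower_gt0 | assumption | assumption].
Qed.

Lemma residual_symbol_weighted_le (x : R) : 0 <= x ->
  Rpower (1 + x) (1 - gamma / 2) * Rabs (residual_symbol alpha m Lam x)
  <= (1 + / alpha) * Rpower (1 + Lam) (- gamma / 2) + (1 + Lam) * e.
Proof.
  intros Hx.
  assert (0 < / alpha) by (apply Rinv_0_lt_compat; lra).
  pose proof (Rpower_gt0 (1 + Lam) (- gamma / 2)).
  destruct (Rle_lt_dec x Lam) as [Hl | Hh].
  - pose proof (residual_symbol_low x (conj Hx Hl)). nra.
  - pose proof (residual_symbol_high x Hh). nra.
Qed.

End ResidualSymbol.

Theorem theorem4p4 :
  forall alpha : R, 0 < alpha ->
  exists C_alpha : R,
  forall (lam : nat -> R), spectral_data lam ->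
  forall (s gamma Lam : R), 0 < gamma -> 0 < Lam ->
  forall (m : R -> R), (exists B, forall x, 0 <= x -> Rabs (m x) <= B) ->
    maps_into lam (s - 1 + gamma) (s + 1) (minus_op (S_g lam alpha) (S_hat lam m Lam)) /\
    Rbar_le (op_norm lam (s - 1 + gamma) (s + 1) (minus_op (S_g lam alpha) (S_hat lam m Lam)))
            (Rbar_plus (Finite (C_alpha * Rpower (1 + Lam) (- gamma / 2)))
                       (Rbar_mult (Finite (1 + Lam)) (eps_Lam alpha m Lam))).
Proof.
  intros alpha Ha. exists (1 + / alpha).
  intros lam [lam_ge0 _] s gamma Lam Hg HL m Hm.
  destruct (eps_Lam_finite alpha m Lam Ha ltac:(lra) Hm) as [e [-> [He0 He]]].
  set (K := (1 + / alpha) * Rpower (1 + Lam) (- gamma / 2) + (1 + Lam) * e).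
  assert (Hweighted : forall k,
    Rpower (1 + lam k) ((s + 1 - (s - 1 + gamma)) / 2)
      * Rabs (residual_symbol alpha m Lam (lam k)) <= K).
  { intros k. replace ((s + 1 - (s - 1 + gamma)) / 2) with (1 - gamma / 2) by field.
    apply residual_symbol_weighted_le; auto; lra. }
  pose proof (S_g_minus_S_hat_diag lam alpha m Lam) as Hdiag.
  split.
  - exact (maps_into_diag lam _ _ K _ _ Hdiag Hweighted).
  - exact (op_norm_diag_le lam _ _ K _ _ Hdiag Hweighted).
Qed.
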